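(* Let $(\mathsf K,\mathsf D)$ be a differential ring and $u\in\mathsf K$. For every integer $m\ge0$, in the Ore algebra $\mathsf K\langle\mathsf D\rangle$, $$(\mathsf D+u)^m=\sum_{j=0}^m\binom mj P_{m-j}(u)\,\mathsf D^j.$$
   Context: $(\mathsf K,\mathsf D)$: unital associative (possibly noncommutative) ring with derivation $\mathsf D$. $\mathsf K\langle\mathsf D\rangle$: Ore algebra with coefficients on the left and $\mathsf D a=a\mathsf D+\mathsf D(a)$. The noncommutative Bell polynomials are $P_0(u)=1$, $P_{m+1}(u)=\mathsf D(P_m(u))+u\,P_m(u)$. *)

From HB Require Import structures.
From mathcomp Require Import all_boot all_order all_algebra.
Set Implicit Arguments. Unset Strict Implicit. Unset Printing Implicit Defensive.
Import GRing.Theory.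
Local Open Scope ring_scope.

Definition is_derivation (K : nzRingType) (D : {additive K -> K}) : Prop :=
  forall a b : K, D (a * b) = D a * b + a * D b.

(* The Ore algebra K<D>: its elements are the operators sum_i a_i D^i with
   coefficients on the left, represented (as an additive group) by {poly K},
   the indeterminate 'X standing for D. *)

(* Left multiplication by D, from the relation D b = b D + D(b):
   D * (sum_j b_j D^j) = sum_j (b_j D^(j+1) + D(b_j) D^j). *)
Definition ore_Dmul (K : nzRingType) (D : {additive K -> K}) (q : {poly K})
  : {poly K} := q * 'X + map_poly D q.

Definition ore_mul (K : nzRingType) (D : {additive K -> K}) (p q : {poly K})
  : {poly K} := \sum_(i < size p) p`_i *: iter i (ore_Dmul D) q.

Definition ore_exp (K : nzRingType) (D : {additive K -> K}) (p : {poly K})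
  (m : nat) : {poly K} := iter m (ore_mul D p) 1.

Fixpoint bellP (K : nzRingType) (D : {additive K -> K}) (u : K) (m : nat) : K :=
  match m with
  | 0 => 1
  | m'.+1 => D (bellP D u m') + u * bellP D u m'
  end.

From mathcomp Require Import all_boot all_order all_algebra.
Import GRing.Theory.
Local Open Scope ring_scope.

(* Left multiplication by D + u sends an operator with coefficients c_j to the
   one with coefficients c_(j-1) + D(c_j) + u c_j.  For c_j = 'C(m, j) P_(m-j)(u)
   this is Pascal's rule combined with the recursion of the Bell polynomials,
   so the expansion follows by induction on m. *)

Lemma ore_expS (K : nzRingType) (D : {additive K -> K}) (p : {poly K}) (m : nat) :
  ore_exp D p m.+1 = ore_mul D p (ore_exp D p m).
Proof. by []. Qed.

Lemma ore_mulXaddC (K : nzRingType) (D : {additive K -> K}) (c : K) (q : {poly K}) :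
  ore_mul D ('X + c%:P) q = c *: q + ore_Dmul D q.
Proof.
rewrite /ore_mul size_XaddC big_ord_recr big_ord1 /=.
by rewrite !coefD !coefX !coefC /= add0r addr0 scale1r.
Qed.

Section BellExpansion.

Variables (K : nzRingType) (D : {additive K -> K}) (u : K).

Definition bell_coef (m j : nat) : K := bellP D u (m - j) *+ 'C(m, j).

Definition bell_expansion (m : nat) : {poly K} := \poly_(j < m.+1) bell_coef m j.

Lemma bell_coef_small (m j : nat) : (m < j)%N -> bell_coef m j = 0.
Proof. by move=> ltmj; rewrite /bell_coef bin_small ?mulr0n. Qed.

Lemma bell_coef0S (m : nat) :
  bell_coef m.+1 0 = u * bell_coef m 0 + D (bell_coef m 0).
Proof. by rewrite /bell_coef !subn0 !bin0 !mulr1n /= addrC. Qed.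

Lemma bell_coefSS (m j : nat) :
  bell_coef m.+1 j.+1 = u * bell_coef m j.+1 + (bell_coef m j + D (bell_coef m j.+1)).
Proof.
have bell_shifted : bellP D u (m - j) *+ 'C(m, j.+1)
    = u * bell_coef m j.+1 + D (bell_coef m j.+1).
  have [ltjm | lemj] := ltnP j m; last first.
    by rewrite !bell_coef_small ?ltnS // bin_small ?ltnS // mulr0n mulr0 raddf0 addr0.
  by rewrite /bell_coef -(subnSK ltjm) /= raddfMn mulrnAr mulrnDl addrC.
by rewrite [LHS]/bell_coef subSS binS mulrnDr bell_shifted addrAC -addrA.
Qed.

Lemma coef_bell_expansion (m j : nat) : (bell_expansion m)`_j = bell_coef m j.
Proof.
rewrite coef_poly; case: ltnP => // lemj.
by rewrite bell_coef_small.
Qed.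

Lemma bell_expansionS (m : nat) :
  bell_expansion m.+1 = u *: bell_expansion m + ore_Dmul D (bell_expansion m).
Proof.
apply/polyP => j; rewrite coef_bell_expansion !coefD coefZ coefMX coef_map /=.
case: j => [|j] /=; rewrite !coef_bell_expansion.
  by rewrite bell_coef0S add0r.
by rewrite bell_coefSS.
Qed.

Lemma ore_exp_XaddC (m : nat) :
  ore_exp D ('X + u%:P) m = bell_expansion m.
Proof.
elim: m => [|m IH].
  by apply/polyP => j; rewrite coef_bell_expansion coefC /bell_coef; case: j.
by rewrite ore_expS IH ore_mulXaddC bell_expansionS.
Qed.

End BellExpansion.

Theorem mainTheorem4 (K : nzRingType) (D : {additive K -> K})
  (hD : is_derivation D) (u : K) (m : nat) :
  ore_exp D ('X + u%:P) m =
  \sum_(j < m.+1) (bellP D u (m - j) *+ 'C(m, j)) *: 'X^j.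
Proof. by rewrite ore_exp_XaddC /bell_expansion poly_def. Qed.
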